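(* Let $f=\frac1{1-X}\in GF(2)[[X]]$ and for $h\in GF(2)[[X]]$ let $\alpha[h]:g\mapsto h+g$. Let $N$ be the group (under composition) generated by $\{\alpha[sf^m]\mid s\in GF(2),\ m\in\mathbb{Z}\}$. Then $N\cong\bigoplus_{\mathbb{Z}}GF^+(2)$.
   Context: $\bigoplus_{\mathbb{Z}}GF^+(2)$ denotes the group of functions $\mathfrak{r}:\mathbb{Z}\to GF(2)$ that are nonzero at only finitely many integers, under pointwise addition. *)

From mathcomp Require Import all_boot all_order all_algebra zify.
From Stdlib Require Import FunctionalExtensionality.
Set Implicit Arguments. Unset Strict Implicit. Unset Printing Implicit Defensive.
Import GRing.Theory Num.Theory.
Local Open Scope ring_scope.

Definition ps := nat -> 'F_2.

Definition ps_add (a b : ps) : ps := fun n => a n + b n.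
Definition ps_scale (s : 'F_2) (a : ps) : ps := fun n => s * a n.
Definition ps_mul (a b : ps) : ps :=
  fun n => \sum_(i < n.+1) a i * b (n - i)%N.
Definition ps_one : ps := fun n => (n == 0%N)%:R.
Definition ps_X : ps := fun n => (n == 1%N)%:R.
Definition ps_pow (a : ps) (k : nat) : ps := iter k (ps_mul a) ps_one.

Definition one_minus_X : ps := fun n => ps_one n - ps_X n.
(* f = 1/(1-X) = sum_k X^k : the series with all coefficients 1 *)
Definition f_ps : ps := fun _ => 1.

Lemma f_ps_inv : ps_mul f_ps one_minus_X = ps_one.
Proof.
rewrite /ps_mul /f_ps /one_minus_X /ps_one /ps_X.
apply: functional_extensionality => n.
case: n => [|n]; first by rewrite big_ord1 /= subr0 mul1r.
rewrite big_ord_recr /= subnn /= subr0 mul1r.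
case: n => [|n]; first by rewrite big_ord1 /= mul1r sub0r addNr.
rewrite big_ord_recr /= subSnn /= sub0r mul1r.
rewrite big1 ?add0r ?addNr //.
move=> i _; rewrite mul1r; have Hi := ltn_ord i.
have -> : ((n.+2 - i)%N == 0%N) = false by apply/eqP; lia.
have -> : ((n.+2 - i)%N == 1%N) = false by apply/eqP; lia.
by rewrite subrr.
Qed.

(* integer powers f^m : f^m for m >= 0, (f^{-1})^{-m} = (1-X)^{-m} for m < 0 *)
Definition f_pow (m : int) : ps :=
  match m with
  | Posz k => ps_pow f_ps k
  | Negz k => ps_pow one_minus_X k.+1
  end.

Definition alpha (h : ps) : ps -> ps := fun g => ps_add h g.

Inductive inN : (ps -> ps) -> Prop :=
  | inN_gen (s : 'F_2) (m : int) : inN (alpha (ps_scale s (f_pow m)))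
  | inN_id : inN id
  | inN_comp g h : inN g -> inN h -> inN (g \o h)
  | inN_inv g h : inN g -> (forall x, g (h x) = x) -> (forall x, h (g x) = x) ->
      inN h.

(* (+)_Z GF^+(2) : finitely supported r : int -> 'F_2, pointwise addition *)
Definition fin_supp (r : int -> 'F_2) : Prop :=
  exists s : seq int, forall z, z \notin s -> r z = 0.

(* A group isomorphism phi : N -> (+)_Z GF^+(2). Elements of N are compared
   as functions (extensional equality). *)
Definition N_iso_sum (phi : (ps -> ps) -> (int -> 'F_2)) : Prop :=
  [/\ (forall g, inN g -> fin_supp (phi g)),
      (forall g h, inN g -> inN h ->
          phi (g \o h) = (fun z => phi g z + phi h z)),
      (forall g h, inN g -> inN h -> phi g = phi h -> g = h)
    & (forall r, fin_supp r -> exists2 g, inN g & phi g = r)].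

From mathcomp Require Import all_boot all_order all_algebra zify.
From Stdlib Require Import FunctionalExtensionality ClassicalEpsilon.
Set Implicit Arguments. Unset Strict Implicit. Unset Printing Implicit Defensive.
Import GRing.Theory Num.Theory.
Local Open Scope ring_scope.

(* In characteristic 2 every translation alpha[h] is an involution and
   translations commute, so N is exactly the group of translations by the
   GF(2)-span of the powers f^m, and it is isomorphic to that span.  The f^m are
   linearly independent: multiplying a finite relation among them by a large
   power (1 - X)^K turns it into a relation among the polynomials (1 - X)^d with
   distinct degrees d, and the coefficient of the highest degree is 1.  The
   coordinates in the basis (f^m) thus identify N with the finitely supported
   functions Z -> GF(2). *)

Lemma F2_cases (x : 'F_2) : x = 0 \/ x = 1.
Proof. by case: x => [[|[|n]] lt_n2] //; [left | right]; apply: val_inj. Qed.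

Lemma addrr_F2 (x : 'F_2) : x + x = 0.
Proof. exact: (addrr_pchar2 (pchar_Fp (isT : prime 2))). Qed.

Lemma addfun_F2_eq0 (T : Type) (a b : T -> 'F_2) :
  (fun x => a x + b x) = (fun _ => 0) <-> a = b.
Proof.
split=> [ab0 | ->]; last by apply: functional_extensionality => x; rewrite addrr_F2.
apply: functional_extensionality => x.
by rewrite -[b x]add0r -(congr1 (fun h => h x) ab0) -addrA addrr_F2 addr0.
Qed.

Definition ps_diff (a : ps) : ps := fun n => if n is n'.+1 then a n - a n' else a 0%N.
Definition ps_psum (a : ps) : ps := fun n => \sum_(i < n.+1) a i.

Lemma ps_mul_one_minus_X (a : ps) : ps_mul one_minus_X a = ps_diff a.
Proof.
apply: functional_extensionality => -[|n]; rewrite /ps_mul /one_minus_X /ps_one /ps_X.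
  by rewrite big_ord1 /= subr0 mul1r.
rewrite !big_ord_recl /= big1 ?addr0; last by move=> i _; rewrite subrr mul0r.
by rewrite subr0 sub0r mul1r mulN1r subn0 /bump /= subn1.
Qed.

Lemma ps_mul_f (a : ps) : ps_mul f_ps a = ps_psum a.
Proof.
apply: functional_extensionality => n; rewrite /ps_psum [RHS](reindex_inj rev_ord_inj).
by apply: eq_bigr => i _; rewrite /f_ps mul1r /= subSS.
Qed.

Lemma ps_psumK : cancel ps_psum ps_diff.
Proof.
move=> a; apply: functional_extensionality => -[|n]; rewrite /ps_diff /ps_psum.
  by rewrite big_ord1.
by rewrite big_ord_recr addrC addKr.
Qed.

Lemma f_pow_nat (k : nat) : f_pow k = iter k ps_psum ps_one.
Proof. by rewrite /= /ps_pow (functional_extensionality _ _ ps_mul_f). Qed.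

Lemma f_pow_Negz (k : nat) : f_pow (Negz k) = iter k.+1 ps_diff ps_one.
Proof. by rewrite /= /ps_pow (functional_extensionality _ _ ps_mul_one_minus_X). Qed.

Lemma ps_diff_f_pow (m : int) : ps_diff (f_pow m) = f_pow (m - 1).
Proof.
case: m => [[|k]|k].
- by rewrite (_ : 0 - 1 = Negz 0) // f_pow_Negz.
- by rewrite (_ : k.+1%:Z - 1 = k) ?f_pow_nat ?iterS ?ps_psumK //; lia.
- by rewrite (_ : Negz k - 1 = Negz k.+1) ?f_pow_Negz //; lia.
Qed.

Lemma f_pow_opp_coef_gt (k n : nat) : (k < n)%N -> f_pow (- k%:Z) n = 0.
Proof.
elim: k n => [|k IH] [|n] // lt_kn.
rewrite (_ : - k.+1%:Z = - k%:Z - 1); last by lia.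
by rewrite -ps_diff_f_pow /= !IH ?subrr //; lia.
Qed.

Lemma f_pow_opp_coef_diag (k : nat) : f_pow (- k%:Z) k = 1.
Proof.
elim: k => [|k IH] //; rewrite (_ : - k.+1%:Z = - k%:Z - 1); last by lia.
rewrite -ps_diff_f_pow /= IH f_pow_opp_coef_gt // sub0r.
by apply: val_inj.
Qed.

(* A finite combination of the f^m is encoded by a list of exponents with
   multiplicities; only the parities of the multiplicities matter. *)
Definition sum_f_pow (s : seq int) : ps := fun n => \sum_(z <- s) f_pow z n.

Lemma sum_f_pow_nil : sum_f_pow [::] = (fun _ => 0).
Proof. by apply: functional_extensionality => n; rewrite /sum_f_pow big_nil. Qed.

Lemma sum_f_pow_seq1 (z : int) : sum_f_pow [:: z] = f_pow z.
Proof. by apply: functional_extensionality => n; rewrite /sum_f_pow big_seq1. Qed.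

Lemma sum_f_pow_cat (s t : seq int) :
  sum_f_pow (s ++ t) = ps_add (sum_f_pow s) (sum_f_pow t).
Proof. by apply: functional_extensionality => n; rewrite /sum_f_pow big_cat. Qed.

Lemma ps_diff_sum_f_pow (s : seq int) :
  ps_diff (sum_f_pow s) = sum_f_pow [seq z - 1 | z <- s].
Proof.
apply: functional_extensionality => n; rewrite /sum_f_pow big_map.
under [RHS]eq_bigr do rewrite -ps_diff_f_pow.
by case: n => [|n] //=; rewrite sumrB.
Qed.

Lemma iter_ps_diff_sum_f_pow (K : nat) (s : seq int) :
  iter K ps_diff (sum_f_pow s) = sum_f_pow [seq z - K%:Z | z <- s].
Proof.
elim: K => [|K IH]; first by rewrite /= (eq_map (@subr0 _)) map_id.
rewrite iterS IH ps_diff_sum_f_pow -map_comp; congr sum_f_pow.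
by apply: eq_map => z /=; lia.
Qed.

Lemma sum_f_pow_nonpos_uniq_eq0 (t : seq int) :
  uniq t -> {in t, forall z, z <= 0} -> sum_f_pow t = (fun _ => 0) -> t = [::].
Proof.
move=> t_uniq t_le0 t_eq0; apply/eqP; rewrite -size_eq0; apply: contraT.
rewrite -lt0n => t_gt0.
have oppz_abs z : z \in t -> - `|z|%:Z = z by move/t_le0; lia.
have exP : exists d, - d%:Z \in t.
  by exists `|nth 0%R t 0|%N; rewrite oppz_abs ?mem_nth.
have ubP d : - d%:Z \in t -> (d <= \max_(z <- t) `|z|)%N.
  by move=> td; rewrite -[d]/(`|d%:Z|%N) -abszN leq_bigmax_seq.
case: (ex_maxnP exP ubP) => M tM maxM.
(* Among the (1 - X)^|z|, only the one of largest degree M reaches X^M. *)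
have := congr1 (fun a => a M) t_eq0.
rewrite /sum_f_pow (bigD1_seq _ tM t_uniq) /= f_pow_opp_coef_diag big_seq_cond big1.
  by rewrite addr0 => /eqP; rewrite oner_eq0.
move=> z /andP[zt z_neq]; rewrite -(oppz_abs z zt) f_pow_opp_coef_gt //.
rewrite ltn_neqAle maxM ?oppz_abs // andbT; apply: contraNneq z_neq => <-.
by rewrite oppz_abs.
Qed.

Lemma sum_f_pow_uniq_eq0 (t : seq int) :
  uniq t -> sum_f_pow t = (fun _ => 0) -> t = [::].
Proof.
move=> t_uniq t_eq0; pose K := \max_(z <- t) `|z|%N.
suff /(congr1 size) : [seq z - K%:Z | z <- t] = [::] by rewrite size_map => /size0nil.
apply: sum_f_pow_nonpos_uniq_eq0.
- by rewrite map_inj_uniq //; apply: addIr.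
- move=> _ /mapP[z zt ->]; have := leq_bigmax_seq z zt isT (F := fun z => `|z|%N).
  by rewrite -/K; lia.
- by rewrite -iter_ps_diff_sum_f_pow t_eq0 -sum_f_pow_nil iter_ps_diff_sum_f_pow.
Qed.

Definition parity (s : seq int) : int -> 'F_2 := fun z => (count_mem z s)%:R.

Lemma parity_cat (s t : seq int) : parity (s ++ t) = (fun z => parity s z + parity t z).
Proof. by apply: functional_extensionality => z; rewrite /parity count_cat natrD. Qed.

Lemma sum_f_pow_undup (s : seq int) :
  sum_f_pow s = (fun n => \sum_(z <- undup s) parity s z * f_pow z n).
Proof.
apply: functional_extensionality => n; rewrite /sum_f_pow -big_undup_iterop_count.
by apply: eq_bigr => z _; rewrite Monoid.iteropE iter_addr_0 mulr_natl.
Qed.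

Lemma sum_f_pow_eq0 (s : seq int) :
  sum_f_pow s = (fun _ => 0) <-> parity s = (fun _ => 0).
Proof.
split=> s_eq0; last first.
  rewrite sum_f_pow_undup s_eq0; apply: functional_extensionality => n.
  by rewrite big1 // => z _; rewrite mul0r.
pose t := [seq z <- undup s | parity s z != 0].
have t_nil : t = [::].
  apply: sum_f_pow_uniq_eq0; first by rewrite filter_uniq ?undup_uniq.
  rewrite -s_eq0 [sum_f_pow s]sum_f_pow_undup; apply: functional_extensionality => n.
  rewrite /sum_f_pow /t big_filter big_mkcond; apply: eq_bigr => z _.
  by case: (F2_cases (parity s z)) => ->; rewrite ?mul0r ?mul1r ?oner_eq0 ?eqxx.
apply: functional_extensionality => z; apply/eqP; apply: contraT => parity_neq0.
suff : z \in t by rewrite t_nil.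
rewrite mem_filter parity_neq0 mem_undup; apply: contraTT parity_neq0.
by move/count_memPn; rewrite /parity => ->; rewrite eqxx.
Qed.

Lemma sum_f_pow_eq (s t : seq int) : sum_f_pow s = sum_f_pow t <-> parity s = parity t.
Proof.
split=> eq_st; apply/addfun_F2_eq0.
- rewrite -parity_cat; apply/sum_f_pow_eq0.
  by rewrite sum_f_pow_cat eq_st; apply/addfun_F2_eq0.
- rewrite -/(ps_add (sum_f_pow s) (sum_f_pow t)) -sum_f_pow_cat; apply/sum_f_pow_eq0.
  by rewrite parity_cat eq_st; apply/addfun_F2_eq0.
Qed.

Lemma parity_surj (r : int -> 'F_2) : fin_supp r -> exists t, parity t = r.
Proof.
case=> s r_supp; exists [seq z <- undup s | r z != 0].
apply: functional_extensionality => z.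
rewrite /parity count_uniq_mem ?filter_uniq ?undup_uniq // mem_filter mem_undup.
case: (F2_cases (r z)) => rz; rewrite rz ?eqxx // oner_eq0 /=.
by case: (boolP (z \in s)) => // /r_supp; rewrite rz => /eqP; rewrite oner_eq0.
Qed.

Lemma ps_scale0 (a : ps) : ps_scale 0 a = (fun _ => 0).
Proof. by apply: functional_extensionality => n; rewrite /ps_scale mul0r. Qed.

Lemma ps_scale1 (a : ps) : ps_scale 1 a = a.
Proof. by apply: functional_extensionality => n; rewrite /ps_scale mul1r. Qed.

Lemma alpha0 : alpha (fun _ => 0) = id.
Proof.
apply: functional_extensionality => x; apply: functional_extensionality => n.
by rewrite /alpha /ps_add add0r.
Qed.

Lemma alpha_comp (a b : ps) : alpha a \o alpha b = alpha (ps_add a b).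
Proof.
apply: functional_extensionality => x; apply: functional_extensionality => n.
by rewrite /alpha /ps_add /= addrA.
Qed.

Lemma alphaK (a : ps) : involutive (alpha a).
Proof.
move=> x; apply: functional_extensionality => n.
by rewrite /alpha /ps_add addrA addrr_F2 add0r.
Qed.

Lemma alpha_inj : injective alpha.
Proof.
move=> a b ab; apply: functional_extensionality => n.
by have := congr1 (fun g => g (fun _ => 0) n) ab; rewrite /alpha /ps_add !addr0.
Qed.

Lemma inN_alphaP (g : ps -> ps) : inN g <-> exists s, g = alpha (sum_f_pow s).
Proof.
split=> [|[s ->]].
  elim=> [c m | | {}g h _ [s ->] _ [t ->] | {}g h _ [s ->] gh _].
  - case: (F2_cases c) => ->; [exists [::] | exists [:: m]].
      by rewrite ps_scale0 sum_f_pow_nil.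
    by rewrite ps_scale1 sum_f_pow_seq1.
  - by exists [::]; rewrite sum_f_pow_nil alpha0.
  - by exists (s ++ t); rewrite alpha_comp sum_f_pow_cat.
  - exists s; apply: functional_extensionality => x.
    by rewrite -(alphaK (sum_f_pow s) (h x)) gh.
elim: s => [|z s IH]; first by rewrite sum_f_pow_nil alpha0; apply: inN_id.
rewrite -cat1s sum_f_pow_cat -alpha_comp; apply: inN_comp IH.
by rewrite sum_f_pow_seq1 -[f_pow z]ps_scale1; apply: inN_gen.
Qed.

(* Junk outside N: there [N_exps g] is an arbitrary list. *)
Definition N_exps (g : ps -> ps) : seq int :=
  epsilon (inhabits [::]) (fun s => g = alpha (sum_f_pow s)).

Definition N_coords (g : ps -> ps) : int -> 'F_2 := parity (N_exps g).

Lemma N_coords_alpha (s : seq int) : N_coords (alpha (sum_f_pow s)) = parity s.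
Proof.
apply/sum_f_pow_eq/alpha_inj; symmetry.
by apply: (epsilon_spec (inhabits [::]) (fun t => _ = alpha (sum_f_pow t))); exists s.
Qed.

Theorem proposition8p9 : exists phi : (ps -> ps) -> (int -> 'F_2), N_iso_sum phi.
Proof.
exists N_coords; split.
- move=> _ /inN_alphaP[s ->]; rewrite N_coords_alpha; exists s => z /count_memPn.
  by rewrite /parity => ->.
- move=> _ _ /inN_alphaP[s ->] /inN_alphaP[t ->].
  by rewrite alpha_comp -sum_f_pow_cat !N_coords_alpha parity_cat.
- move=> _ _ /inN_alphaP[s ->] /inN_alphaP[t ->].
  by rewrite !N_coords_alpha => /sum_f_pow_eq ->.
- move=> r /parity_surj[t <-]; exists (alpha (sum_f_pow t)); last exact: N_coords_alpha.
  by apply/inN_alphaP; exists t.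
Qed.
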